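(* Let $\mathfrak{A}\subset\mathfrak{F}=\mathbb{C}(x_1,\ldots,x_n)$ be the cluster algebra of geometric type defined by an initial seed $(\mathbf{x},B)$, $\mathbf{x}=(x_1,\ldots,x_n)$, where $B=(b_{ij})$ is an $m\times n$ integer matrix ($m\le n$) whose principal $m\times m$ submatrix is skew-symmetrizable, and let $\Lambda=(\lambda_{ij})$ be a skew-symmetric $n\times n$ matrix such that the log-canonical Poisson bracket $\{x_i,x_j\}_\Lambda=\lambda_{ij}x_ix_j$ (extended to $\mathfrak{F}$) is compatible with $\mathfrak{A}$. Then $\{\cdot,\cdot\}_\Lambda$ restricts to a Poisson algebra structure on the upper bound $\mathcal{U}_{\mathbf{x},B}(\mathfrak{A})$ and on the upper cluster algebra $\mathcal{U}(\mathfrak{A})$; i.e. both are closed under $\{\cdot,\cdot\}_\Lambda$.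
   Context: Cluster mutation: for $1\le i\le m$ the exchange polynomial is $P_i=\prod_{k=1}^n x_k^{\max(b_{ik},0)}+\prod_{k=1}^n x_k^{-\min(b_{ik},0)}$, and $y_i\in\mathfrak{F}$ is defined by $x_iy_i=P_i$; the new extended cluster is $(x_1,\ldots,x_{i-1},y_i,x_{i+1},\ldots,x_n)$, with exchange matrix obtained by the usual Fomin–Zelevinsky matrix mutation; $x_{m+1},\ldots,x_n$ are frozen and never mutated. The cluster algebra is the subalgebra of $\mathfrak{F}$ generated by all cluster variables of all seeds mutation equivalent to $(\mathbf{x},B)$. A Poisson bracket on $\mathfrak{F}$ is log-canonical with respect to an extended cluster $(z_1,\ldots,z_n)$ if $\{z_i,z_j\}=c_{ij}z_iz_j$ with $c_{ij}\in\mathbb{C}$; it is compatible with $\mathfrak{A}$ if it is log-canonical with respect to every extended cluster. The upper bound is $\mathcal{U}_{\mathbf{x},B}(\mathfrak{A})=\bigcap_{j=1}^m\mathbb{C}[x_1^{\pm1},\ldots,x_{j-1}^{\pm1},x_j,y_j,x_{j+1}^{\pm1},\ldots,x_m^{\pm1},x_{m+1},\ldots,x_n]$, and the upper cluster algebra $\mathcal{U}(\mathfrak{A})$ is the intersection of the upper bounds $\mathcal{U}_{\mathbf{x}',B'}(\mathfrak{A})$ over all seeds $(\mathbf{x}',B')$ mutation equivalent to $(\mathbf{x},B)$. *)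

From HB Require Import structures.
From mathcomp Require Import all_boot all_order all_algebra.
From mathcomp Require Import mpoly.
Set Implicit Arguments. Unset Strict Implicit. Unset Printing Implicit Defensive.
Import Order.TTheory GRing.Theory Num.Theory.
Local Open Scope ring_scope.

Definition ratfun (K : numClosedFieldType) (n : nat) : fieldType :=
  {fraction {mpoly K[n]}}.

Section Cluster.
Variables (K : numClosedFieldType) (m n : nat) (hmn : (m <= n)%N).
Local Notation F := (ratfun K n).

Definition kF (c : K) : F := @FracField.tofrac _ (c%:MP).
Definition xvar (i : 'I_n) : F := @FracField.tofrac _ 'X_i.

Definition seed := ((('I_n -> F) * 'M[int]_(m, n))%type).

Definition col (k : 'I_m) : 'I_n := widen_ord hmn k.

Definition skew_symmetrizable (B : 'M[int]_(m, n)) : Prop :=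
  exists d : 'I_m -> int, (forall i, 0 < d i) /\
    forall i j : 'I_m, d i * B i (col j) = - (d j * B j (col i)).

Definition exch_poly (x : 'I_n -> F) (B : 'M[int]_(m, n)) (k : 'I_m) : F :=
  \prod_(l < n) x l ^+ `|Num.max (B k l) 0|%N
  + \prod_(l < n) x l ^+ `|- Num.min (B k l) 0|%N.

Definition new_var (x : 'I_n -> F) (B : 'M[int]_(m, n)) (k : 'I_m) : F :=
  exch_poly x B k / x (col k).

Definition mut_mx (B : 'M[int]_(m, n)) (k : 'I_m) : 'M[int]_(m, n) :=
  \matrix_(i < m, j < n)
    if (i == k) || (j == col k) then - B i j
    else B i j + ((`|B i (col k)| * B k j + B i (col k) * `|B k j|) %/ 2)%Z.

Definition mutate (s : seed) (k : 'I_m) : seed :=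
  let: (x, B) := s in
  ((fun j => if j == col k then new_var x B k else x j), mut_mx B k).

Definition mutate_seq (s : seed) (ks : seq 'I_m) : seed := foldl mutate s ks.

Inductive in_subalg (gens : F -> Prop) : F -> Prop :=
| sa_const c : in_subalg gens (kF c)
| sa_gen g : gens g -> in_subalg gens g
| sa_add f g : in_subalg gens f -> in_subalg gens g -> in_subalg gens (f + g)
| sa_mul f g : in_subalg gens f -> in_subalg gens g -> in_subalg gens (f * g).

(* generators of C[x_1^{±1},...,x_{j-1}^{±1},x_j,y_j,x_{j+1}^{±1},...,x_m^{±1},x_{m+1},...,x_n] *)
Definition upper_gens (s : seed) (j : 'I_m) (f : F) : Prop :=
  let: (x, B) := s in
  [\/ f = x (col j), f = new_var x B j |
      exists i : 'I_n, i != col j /\ (f = x i \/ ((i < m)%N /\ f = (x i)^-1))].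

Definition upper_bound (s : seed) (f : F) : Prop :=
  forall j : 'I_m, in_subalg (upper_gens s j) f.

Definition upper_cluster_algebra (s : seed) (f : F) : Prop :=
  forall ks : seq 'I_m, upper_bound (mutate_seq s ks) f.

Definition log_canonical (br : F -> F -> F) (z : 'I_n -> F) : Prop :=
  forall i j : 'I_n, exists c : K, br (z i) (z j) = kF c * z i * z j.

Definition compatible (br : F -> F -> F) (s : seed) : Prop :=
  forall ks : seq 'I_m, log_canonical br (mutate_seq s ks).1.

End Cluster.
Arguments xvar {K n}.
Arguments kF {K} n c.

(* br is the K-bilinear Poisson bracket on F with {x_i,x_j} = lambda_ij x_i x_j
   (there is exactly one such bracket: the extension of the log-canonical one to F) *)
Definition is_log_canonical_bracket (K : numClosedFieldType) (n : nat)
    (Lam : 'M[K]_n) (br : ratfun K n -> ratfun K n -> ratfun K n) : Prop :=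
  [/\ forall f g, br f g = - br g f,
      forall c f g h, br f (kF n c * g + h) = kF n c * br f g + br f h,
      forall f g h, br f (g * h) = br f g * h + g * br f h,
      forall f g h, br f (br g h) + br g (br h f) + br h (br f g) = 0 &
      forall i j, br (xvar i) (xvar j) = kF n (Lam i j) * xvar i * xvar j].

Definition closed_under (K : numClosedFieldType) (n : nat)
    (br : ratfun K n -> ratfun K n -> ratfun K n) (S : ratfun K n -> Prop) : Prop :=
  forall f g, S f -> S g -> S (br f g).

From Pilot Require Import Defs.
From HB Require Import structures.
From mathcomp Require Import all_boot all_order all_algebra.
From mathcomp Require Import mpoly.
From mathcomp Require Import ring.
Import Order.TTheory GRing.Theory Num.Theory.
Local Open Scope ring_scope.

(* Every generator of the j-th Laurent-type
   ring except x_j is a cluster variable of the mutated seed or its inverse, so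
   by compatibility any two of them form a log-canonical pair, whose bracket
   c u v stays in the ring. For x_j itself, {x_j, x_i^{±1}} is log-canonical
   too, and {x_j, y_j} = {x_j, P_j} / x_j + c P_j: since P_j is a polynomial in
   the x_l, each log-canonical with x_j, the Leibniz rule gives
   {x_j, P_j} = x_j h with h a polynomial, so x_j cancels. The Leibniz rule then
   propagates closure from generators to the whole ring. *)

Lemma kF0 (K : numClosedFieldType) n : kF n (0 : K) = 0.
Proof. by rewrite /kF mpolyC0 rmorph0. Qed.

Lemma kF1 (K : numClosedFieldType) n : kF n (1 : K) = 1.
Proof. by rewrite /kF mpolyC1 rmorph1. Qed.

Lemma kFN (K : numClosedFieldType) n (c : K) : kF n (- c) = - kF n c.
Proof. by rewrite /kF mpolyCN rmorphN. Qed.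

Definition log_canonical_pair (K : numClosedFieldType) n
    (br : ratfun K n -> ratfun K n -> ratfun K n) (u v : ratfun K n) : Prop :=
  exists c : K, br u v = kF n c * u * v.

Section Subalgebra.
Variables (K : numClosedFieldType) (n : nat).
Local Notation F := (ratfun K n).
Implicit Types (G H : F -> Prop) (f g : F).

Lemma in_subalg0 G : in_subalg G 0.
Proof. by rewrite -(kF0 K n); constructor. Qed.

Lemma in_subalg1 G : in_subalg G 1.
Proof. by rewrite -(kF1 K n); constructor. Qed.

Lemma in_subalgN G f : in_subalg G f -> in_subalg G (- f).
Proof.
move=> Gf; rewrite -mulN1r -(kF1 K n) -kFN.
by apply: sa_mul => //; constructor.
Qed.

Lemma in_subalgX G f e : in_subalg G f -> in_subalg G (f ^+ e).
Proof.
move=> Gf; elim: e => [|e IHe]; first by rewrite expr0; apply: in_subalg1.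
by rewrite exprS; apply: sa_mul.
Qed.

Lemma in_subalg_sub G H : (forall g, G g -> in_subalg H g) ->
  forall f, in_subalg G f -> in_subalg H f.
Proof.
move=> GH f; elim=> [c|g /GH//|f1 f2 _ IH1 _ IH2|f1 f2 _ IH1 _ IH2].
- exact: sa_const.
- exact: sa_add.
- exact: sa_mul.
Qed.

End Subalgebra.

Section Bracket.
Variables (K : numClosedFieldType) (n : nat).
Local Notation F := (ratfun K n).
Variable br : F -> F -> F.
Hypothesis brC : forall f g, br f g = - br g f.
Hypothesis br_linear : forall c f g h, br f (kF n c * g + h) = kF n c * br f g + br f h.
Hypothesis brMr : forall f g h, br f (g * h) = br f g * h + g * br f h.
Implicit Types (G : F -> Prop) (f g h u v : F).
Local Notation lcp := (@log_canonical_pair K n br).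

Lemma br0r f : br f 0 = 0.
Proof. by move: (brMr f 0 0); rewrite !(mulr0, mul0r, addr0). Qed.

Lemma br1r f : br f 1 = 0.
Proof. by move/eqP: (brMr f 1 1); rewrite !(mulr1, mul1r) -subr_eq0 opprD addrA subrr add0r oppr_eq0 => /eqP. Qed.

Lemma brDr f g h : br f (g + h) = br f g + br f h.
Proof. by rewrite -[g]mul1r -(kF1 K n) br_linear kF1 !mul1r. Qed.

Lemma br_kFr f c : br f (kF n c) = 0.
Proof. by rewrite -[kF n c]addr0 -[kF n c]mulr1 br_linear br1r br0r mulr0 addr0. Qed.

Lemma br_kFl f c : br (kF n c) f = 0.
Proof. by rewrite brC br_kFr oppr0. Qed.

Lemma brDl f g h : br (f + g) h = br f h + br g h.
Proof. by rewrite brC brDr opprD -!brC. Qed.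

Lemma brMl f g h : br (f * g) h = br f h * g + f * br g h.
Proof. by rewrite brC brMr opprD -mulNr -mulrN -!brC. Qed.

Lemma log_canonical_pair_sym u v : lcp u v -> lcp v u.
Proof. by case=> c E; exists (- c); rewrite brC E kFN; ring. Qed.

Lemma log_canonical_pair_invr u v : lcp u v -> lcp u v^-1.
Proof.
case=> c E; exists (- c).
have [->|v_neq0] := eqVneq v 0; first by rewrite invr0 br0r mulr0.
have vE : v * br u v^-1 = - (kF n c * u).
  apply/eqP; rewrite -addr_eq0 addrC -[kF n c * u](mulfK v_neq0) -E.
  by rewrite -brMr divff // br1r.
by rewrite -[br u v^-1](mulKf v_neq0) vE kFN; ring.
Qed.

Lemma log_canonical_pair_invl u v : lcp u v -> lcp u^-1 v.
Proof. by move/log_canonical_pair_sym/log_canonical_pair_invr/log_canonical_pair_sym. Qed.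

Lemma in_subalg_br_lcp G u v :
  lcp u v -> in_subalg G u -> in_subalg G v -> in_subalg G (br u v).
Proof. by case=> c -> Gu Gv; apply: sa_mul => //; apply: sa_mul => //; apply: sa_const. Qed.

Lemma in_subalg_br_closed G :
  (forall g h, G g -> G h -> in_subalg G (br g h)) ->
  forall f g, in_subalg G f -> in_subalg G g -> in_subalg G (br f g).
Proof.
move=> brG.
have brGl a : G a -> forall f, in_subalg G f -> in_subalg G (br a f).
  move=> Ga f; elim=> [c|g /(brG a g Ga)//|f1 f2 _ IH1 _ IH2|f1 f2 F1 IH1 F2 IH2].
  - by rewrite br_kFr; apply: in_subalg0.
  - by rewrite brDr; apply: sa_add.
  - by rewrite brMr; apply: sa_add; apply: sa_mul.
move=> f g Gf; elim: Gf g => [c|a Ga|f1 f2 F1 IH1 F2 IH2|f1 f2 F1 IH1 F2 IH2] g Gg.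
- by rewrite br_kFl; apply: in_subalg0.
- exact: brGl.
- by rewrite brDl; apply: sa_add; auto.
- by rewrite brMl; apply: sa_add; apply: sa_mul; auto.
Qed.

Lemma br_lcp_factor {a G} : (forall g, G g -> lcp a g) ->
  forall f, in_subalg G f -> exists2 h, in_subalg G h & br a f = a * h.
Proof.
move=> lcpG f; elim=> [c|g Gg|f1 f2 _ [h1 G1 E1] _ [h2 G2 E2]|
                        f1 f2 F1 [h1 G1 E1] F2 [h2 G2 E2]].
- by exists 0; [apply: in_subalg0 | rewrite br_kFr mulr0].
- have [c ->] := lcpG g Gg; exists (kF n c * g); last by ring.
  by apply: sa_mul; apply: sa_const || apply: sa_gen.
- by exists (h1 + h2); [apply: sa_add | rewrite brDr E1 E2 mulrDr].
- exists (h1 * f2 + f1 * h2); last by rewrite brMr E1 E2; ring.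
  by apply: sa_add; apply: sa_mul.
Qed.

Section Seed.
Variables (m : nat) (hmn : (m <= n)%N) (x : 'I_n -> F) (B : 'M[int]_(m, n)) (j : 'I_m).
Hypothesis lc_x : log_canonical br x.
Hypothesis lc_mutate : log_canonical br (mutate hmn (x, B) j).1.
Local Notation xj := (x (Defs.col hmn j)).
Local Notation yj := (new_var hmn x B j).
Local Notation U := (in_subalg (upper_gens hmn (x, B) j)).
Local Notation z := (mutate hmn (x, B) j).1.

Definition mutated_unit (g : F) : Prop := exists i, g = z i \/ g = (z i)^-1.

Lemma upper_xvar i : U (x i).
Proof.
apply: sa_gen; have [->|ne] := eqVneq i (Defs.col hmn j); first exact: Or31.
by apply: Or33; exists i; split; [exact: ne | left].
Qed.

Lemma lcp_mutated_unit g h : mutated_unit g -> mutated_unit h -> lcp g h.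
Proof.
have lcp_z i l : lcp (z i) (z l) by exact: lc_mutate.
move=> [i [->|->]] [l [->|->]].
- exact: lcp_z.
- exact/log_canonical_pair_invr.
- exact/log_canonical_pair_invl.
- exact/log_canonical_pair_invl/log_canonical_pair_invr.
Qed.

Lemma upper_gens_cases {g} :
  upper_gens hmn (x, B) j g -> g = xj \/ mutated_unit g.
Proof.
have zx i : i != Defs.col hmn j -> z i = x i by move=> /negbTE /= ->.
case=> [->|->|[i [ne [->|[_ ->]]]]]; [by left | right..].
- by exists (Defs.col hmn j); left; rewrite /= eqxx.
- by exists i; left; rewrite zx.
- by exists i; right; rewrite zx.
Qed.

Lemma exch_poly_in_subalg :
  in_subalg (fun g => exists l, g = x l) (exch_poly x B j).
Proof.
by apply: sa_add; apply: big_ind => [|u v|l _];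
  do [exact: in_subalg1 | exact: sa_mul | apply/in_subalgX/sa_gen; exists l].
Qed.

Lemma upper_br_xj_new_var : U (br xj yj).
Proof.
have [->|xj_neq0] := eqVneq xj 0; first by rewrite brC br0r oppr0; apply: in_subalg0.
have xU g : (exists l, g = x l) -> U g by move=> [l ->]; apply: upper_xvar.
have lcp_xj g : (exists l, g = x l) -> lcp xj g by move=> [l ->]; apply: lc_x.
have [h Gh Eh] := br_lcp_factor lcp_xj _ exch_poly_in_subalg.
have [c Ec] : lcp xj xj^-1 by apply/log_canonical_pair_invr/lc_x.
have -> : br xj yj = h + kF n c * exch_poly x B j.
  rewrite /new_var brMr Eh Ec mulrAC divff // mul1r -mulrA divff // mulr1.
  by rewrite mulrC.
apply: sa_add; first exact: in_subalg_sub xU _ Gh.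
by apply: sa_mul; [apply: sa_const | apply: in_subalg_sub xU _ exch_poly_in_subalg].
Qed.

Lemma upper_br_xj g : upper_gens hmn (x, B) j g -> U (br xj g).
Proof.
case=> [->|->|[i [ne [->|[lt_im ->]]]]].
- by apply: in_subalg_br_lcp; [exact: lc_x | exact: upper_xvar..].
- exact: upper_br_xj_new_var.
- by apply: in_subalg_br_lcp; [exact: lc_x | exact: upper_xvar..].
- apply: in_subalg_br_lcp; first exact/log_canonical_pair_invr/lc_x.
    exact: upper_xvar.
  by apply: sa_gen; apply: Or33; exists i; split => //; right.
Qed.

Lemma upper_br_closed f g : U f -> U g -> U (br f g).
Proof.
move: f g; apply: in_subalg_br_closed => u v Gu Gv.
have [->|uu] := upper_gens_cases Gu; first exact: upper_br_xj.
have [->|uv] := upper_gens_cases Gv.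
  by rewrite brC; apply/in_subalgN/upper_br_xj.
by apply: in_subalg_br_lcp; [exact: lcp_mutated_unit uu uv | apply: sa_gen..].
Qed.

End Seed.
End Bracket.

Theorem mainTheorem1 (K : numClosedFieldType) (m n : nat) (hmn : (m <= n)%N)
    (B : 'M[int]_(m, n)) (Lam : 'M[K]_n)
    (br : ratfun K n -> ratfun K n -> ratfun K n) :
  skew_symmetrizable hmn B ->
  Lam^T = - Lam ->
  is_log_canonical_bracket Lam br ->
  compatible hmn br (xvar, B) ->
  closed_under br (upper_bound hmn (xvar, B)) /\
  closed_under br (upper_cluster_algebra hmn (xvar, B)).
Proof.
move=> _ _ [brC br_linear brMr _ _] compat.
have upper_bound_closed ks :
    closed_under br (upper_bound hmn (mutate_seq hmn (xvar, B) ks)).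
  move=> f g Uf Ug j; move: Uf Ug (compat ks) (compat (rcons ks j)).
  rewrite /mutate_seq foldl_rcons; case: foldl => x B' Uf Ug lc_x lc_mutate.
  exact: upper_br_closed brC br_linear brMr _ _ _ _ _ lc_x lc_mutate _ _ (Uf j) (Ug j).
split; first exact: (upper_bound_closed [::]).
by move=> f g Uf Ug ks; apply: upper_bound_closed.
Qed.
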